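(* Let $B(y)=|h(y)-(1-V)|$ be randomized response with $h:\mathbb Y\to\{0,1\}$, $V\sim\mathrm{Bern}(\theta)$, $\theta\in[0,1]$, and let $S$ be subsampling without replacement with batch size $q$. Then for all $\alpha>1$ and all datasets $x\simeq_\Delta x'$ of size $N$, $$\Lambda_\alpha(m_x\|m_{x'})\le\max_{\tau\in\{\theta,1-\theta\}}\Lambda_\alpha\big((1-w)\mathrm{Bern}(\cdot\mid\theta)+w\,\mathrm{Bern}(\cdot\mid\tau)\ \big\|\ (1-w)\mathrm{Bern}(\cdot\mid\theta)+w\,\mathrm{Bern}(\cdot\mid1-\tau)\big),$$ with $w=q/N$.
   Context: Datasets are finite sets with more than $q$ elements; batches are subsets of size $q$; subsampling without replacement: $s_x(y)=\binom{|x|}{q}^{-1}$ for $y\subseteq x$, $|y|=q$. $b_y$ is the pmf of $B(y)$ on $\{0,1\}$ and $m_x=\sum_y b_y s_x(y)$. $\mathrm{Bern}(\cdot\mid p)$ is the pmf on $\{0,1\}$ with mass $p$ at $1$. $x\simeq_\Delta x'$ iff $x'=(x\setminus\{a\})\cup\{a'\}$ with $a\in x$, $a'\notin x$. $\Lambda_\alpha(p\|q)=\sum_{z\in\{0,1\}}p(z)^\alpha q(z)^{1-\alpha}$. *)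

From HB Require Import structures.
From mathcomp Require Import all_boot all_order all_algebra.
From mathcomp Require Import finmap.
From mathcomp Require Import reals constructive_ereal exp.
Set Implicit Arguments. Unset Strict Implicit. Unset Printing Implicit Defensive.
Import Order.TTheory GRing.Theory Num.Theory.
Local Open Scope ring_scope.
Local Open Scope fset_scope.

(* pmfs on {0,1} are functions bool -> R (true = 1, false = 0). *)
Definition Bern (R : realType) (p : R) : bool -> R :=
  fun z => if z then p else 1 - p.

Definition rr_pmf (R : realType) (theta : R) (hy : bool) : bool -> R :=
  fun z => \sum_(v : bool) Bern theta v *
             (`| (hy : nat)%:R - (1 - (v : nat)%:R) | == (z : nat)%:R :> R)%:R.

Definition batches (T : choiceType) (q : nat) (x : {fset T}) : seq {fset T} :=
  [seq y <- enum_fset (fpowerset x) | #|` y| == q].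

(* m_x = sum_y b_y s_x(y), with s_x(y) = binom(|x|, q)^-1 (without replacement). *)
Definition mix_pmf (R : realType) (T : choiceType) (q : nat) (theta : R)
  (h : {fset T} -> bool) (x : {fset T}) : bool -> R :=
  fun z => \sum_(y <- batches q x) rr_pmf theta (h y) z * ('C(#|` x|, q)%:R)^-1.

Definition neighbour (T : choiceType) (x x' : {fset T}) : Prop :=
  exists a a', [/\ a \in x, a' \notin x & x' = (x `\ a) `|` [fset a']].

(* Lambda_alpha(p || q) = sum_z p(z)^alpha q(z)^(1-alpha), in extended reals,
   with conventions 0^alpha * anything = 0 and c/0 = +oo for c > 0. *)
Definition Lambda (R : realType) (alpha : R) (p q : bool -> R) : \bar R :=
  (\sum_(z : bool)
     (if p z == 0%R then 0%E
      else if q z == 0%R then +oo%E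
      else ((p z `^ alpha) * (q z `^ (1 - alpha)))%:E))%E.

Definition mixture (R : realType) (w : R) (p1 p2 : bool -> R) : bool -> R :=
  fun z => ((1 - w) * p1 z + w * p2 z)%R.

From HB Require Import structures.
From mathcomp Require Import all_boot all_order all_algebra.
From mathcomp Require Import finmap.
From mathcomp Require Import reals constructive_ereal exp.
From mathcomp Require Import ring lra.
Set Implicit Arguments. Unset Strict Implicit. Unset Printing Implicit Defensive.
Import Order.TTheory GRing.Theory Num.Theory.
Local Open Scope ring_scope.

(* Every distribution involved is a Bernoulli law on {0,1}. Splitting the q-batches of
   x according to whether they contain the substituted point, the success probabilities
   of m_x and m_x' are (1 - w) A + w B and (1 - w) A + w B', where A, B, B' are averages
   of randomized-response probabilities and hence lie between theta and 1 - theta.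
   The map (u, v) |-> Lambda_alpha(Bern u || Bern v) is jointly convex (it is a sum of
   perspectives of t |-> t^alpha), so as a function of (A, B, B') it is maximal at a
   vertex of the cube [theta, 1 - theta]^3; the symmetry u, v |-> 1 - u, 1 - v
   identifies each vertex value with 1 or one of the two terms of the maximum. When
   theta is 0 or 1 and q > 0, the second term of the maximum is infinite. *)

Section RealFacts.
Variable R : realType.
Implicit Types (a l r t p q u v x y lo hh : R).

Lemma conv_le_max l x y : 0 <= l <= 1 -> l * x + (1 - l) * y <= Num.max x y.
Proof.
case/andP=> l0 l1; have l0' : 0 <= 1 - l by rewrite subr_ge0.
have hx : x <= Num.max x y by rewrite le_max lexx.
have hy : y <= Num.max x y by rewrite le_max lexx orbT.
have := ler_wpM2l l0 hx; have := ler_wpM2l l0' hy.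
lra.
Qed.

Lemma between_convex_comb lo hh t : Num.min lo hh <= t <= Num.max lo hh ->
  exists2 l, 0 <= l <= 1 & t = l * lo + (1 - l) * hh.
Proof.
wlog le_lh : lo hh / lo <= hh => [wlog_lh|].
  case/orP: (le_total lo hh) => [|le_hl]; first exact: wlog_lh.
  rewrite minC maxC => /(wlog_lh _ _ le_hl)[l l01 ->].
  by exists (1 - l); [move: l01 => /andP[? ?]; apply/andP; split; lra | ring].
rewrite (min_idPl le_lh) (max_idPr le_lh) => /andP[lot thh].
have [eq_lh|ne_lh] := eqVneq lo hh.
  by exists 1; [rewrite ler01 lexx | rewrite subrr mul0r addr0 mul1r; lra].
have lt_lh : 0 < hh - lo by rewrite subr_gt0 lt_neqAle ne_lh.
exists ((hh - t) / (hh - lo)); last by field; rewrite gt_eqF.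
by rewrite divr_ge0 ?subr_ge0 //= ler_pdivrMr // mul1r lerB.
Qed.

(* Young's inequality with the conjugate exponent [a / (a - 1)], applied to [t] and
   [r `^ (a - 1)]. *)
Lemma powR_tangent a r t : 1 < a -> 0 <= r -> 0 <= t ->
  r `^ a + a * r `^ (a - 1) * (t - r) <= t `^ a.
Proof.
move=> a1 r0 t0; have a0 : 0 < a by lra.
have a10 : 0 < a - 1 by lra.
have young := conjugate_powR t0 (powR_ge0 r (a - 1)) a0 (divr_gt0 a0 a10).
rewrite -powRrM mulrCA divff ?gt_eqF // mulr1 invf_div in young.
have /young {}young : a^-1 + (a - 1) / a = 1 by field; rewrite gt_eqF.
have rr : r * r `^ (a - 1) = r `^ a by rewrite mulr_powRB1.
have := ler_wpM2l (ltW a0) young.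
have -> : a * (t `^ a / a + r `^ a * ((a - 1) / a)) = t `^ a + (a - 1) * r `^ a.
  by field; rewrite gt_eqF.
rewrite -rr; nra.
Qed.

Definition Lambda_term a p q := p `^ a * q `^ (1 - a).

Lemma Lambda_term_scale a t q : 0 <= t -> 0 <= q ->
  Lambda_term a (t * q) q = t `^ a * q.
Proof.
move=> t0 q0; rewrite /Lambda_term powRM // -mulrA -powRD ?subrKC ?oner_eq0 //.
by rewrite powRr1.
Qed.

Lemma Lambda_term_diag a p : 0 <= p -> Lambda_term a p p = p.
Proof.
by move=> p0; rewrite -[X in Lambda_term _ X]mul1r Lambda_term_scale // powR1 mul1r.
Qed.

Lemma Lambda_term_tangent a p q r : 1 < a -> 0 <= p -> 0 < q -> 0 <= r ->
  q * r `^ a + a * r `^ (a - 1) * (p - r * q) <= Lambda_term a p q.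
Proof.
move=> a1 p0 q0 r0; have pq0 : 0 <= p / q by exact: divr_ge0 p0 (ltW q0).
rewrite -[X in Lambda_term _ X](divfK (lt0r_neq0 q0)) (Lambda_term_scale _ pq0 (ltW q0)).
have := ler_wpM2l (ltW q0) (powR_tangent a1 r0 pq0).
have -> : q * (r `^ a + a * r `^ (a - 1) * (p / q - r)) =
  q * r `^ a + a * r `^ (a - 1) * (p - r * q) by field; rewrite gt_eqF.
by rewrite [_ `^ a * q]mulrC.
Qed.

(* The perspective [q * (p / q) `^ a] of a convex function is jointly convex: at the
   mixture, the tangent planes at slope [r = pm / qm] are tight. *)
Lemma Lambda_term_convex a l p1 q1 p2 q2 : 1 < a -> 0 <= l <= 1 ->
  0 <= p1 -> 0 < q1 -> 0 <= p2 -> 0 < q2 ->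
  Lambda_term a (l * p1 + (1 - l) * p2) (l * q1 + (1 - l) * q2) <=
  l * Lambda_term a p1 q1 + (1 - l) * Lambda_term a p2 q2.
Proof.
move=> a1 /andP[l0 l1] p10 q10 p20 q20.
set pm := l * p1 + (1 - l) * p2; set qm := l * q1 + (1 - l) * q2.
have l0' : 0 <= 1 - l by rewrite subr_ge0.
have qm0 : 0 < qm by rewrite /qm; nra.
have pm0 : 0 <= pm by rewrite /pm; nra.
have r0 : 0 <= pm / qm by exact: divr_ge0 pm0 (ltW qm0).
have pmE : pm = pm / qm * qm by rewrite divfK ?gt_eqF.
rewrite [X in Lambda_term _ X]pmE (Lambda_term_scale _ r0 (ltW qm0)).
have t1 := ler_wpM2l l0 (Lambda_term_tangent a1 p10 q10 r0).
have t2 := ler_wpM2l l0' (Lambda_term_tangent a1 p20 q20 r0).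
set r := pm / qm; set K := r `^ (a - 1).
have -> : r `^ a * qm = l * (q1 * r `^ a + a * K * (p1 - r * q1)) +
    (1 - l) * (q2 * r `^ a + a * K * (p2 - r * q2)).
  transitivity (qm * r `^ a + a * K * (pm - r * qm)); last by rewrite /pm /qm; ring.
  by rewrite -pmE subrr mulr0 addr0 mulrC.
exact: lerD t1 t2.
Qed.

Definition Lambda_Bern a u v := Lambda_term a u v + Lambda_term a (1 - u) (1 - v).

Lemma Lambda_Bern_sym a u v : Lambda_Bern a (1 - u) (1 - v) = Lambda_Bern a u v.
Proof. by rewrite /Lambda_Bern !subKr addrC. Qed.

Lemma Lambda_Bern_diag a u : 0 <= u <= 1 -> Lambda_Bern a u u = 1.
Proof.
case/andP=> u0 u1.
by rewrite /Lambda_Bern !Lambda_term_diag ?subr_ge0 // subrKC.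
Qed.

Lemma Lambda_Bern_ge1 a u v : 1 < a -> 0 <= u <= 1 -> 0 < v < 1 ->
  1 <= Lambda_Bern a u v.
Proof.
move=> a1 /andP[u0 u1] /andP[v0 v1].
have t1 := Lambda_term_tangent a1 u0 v0 ler01.
have t2 := @Lambda_term_tangent a (1 - u) (1 - v) 1 a1.
rewrite subr_ge0 subr_gt0 in t2; have {}t2 := t2 u1 v1 ler01.
rewrite powR1 in t1 t2; rewrite /Lambda_Bern; apply: le_trans (lerD t1 t2); nra.
Qed.

Lemma Lambda_Bern_convex a l u1 v1 u2 v2 : 1 < a -> 0 <= l <= 1 ->
  0 <= u1 <= 1 -> 0 < v1 < 1 -> 0 <= u2 <= 1 -> 0 < v2 < 1 ->
  Lambda_Bern a (l * u1 + (1 - l) * u2) (l * v1 + (1 - l) * v2) <=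
  l * Lambda_Bern a u1 v1 + (1 - l) * Lambda_Bern a u2 v2.
Proof.
move=> a1 l01 /andP[u10 u11] /andP[v10 v11] /andP[u20 u21] /andP[v20 v21].
have e (x y : R) : 1 - (l * x + (1 - l) * y) = l * (1 - x) + (1 - l) * (1 - y) by ring.
rewrite /Lambda_Bern !e.
have h1 := Lambda_term_convex a1 l01 u10 v10 u20 v20.
have h2 := @Lambda_term_convex a l (1 - u1) (1 - v1) (1 - u2) (1 - v2) a1 l01.
rewrite !subr_ge0 !subr_gt0 in h2; have {}h2 := h2 u11 v11 u21 v21.
by apply: le_trans (lerD h1 h2) _; nra.
Qed.

Lemma Lambda_Bern_affine_le_max a (u v : R -> R) lo hh t : 1 < a ->
  (forall l x y, u (l * x + (1 - l) * y) = l * u x + (1 - l) * u y) ->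
  (forall l x y, v (l * x + (1 - l) * y) = l * v x + (1 - l) * v y) ->
  Num.min lo hh <= t <= Num.max lo hh ->
  0 <= u lo <= 1 -> 0 < v lo < 1 -> 0 <= u hh <= 1 -> 0 < v hh < 1 ->
  Lambda_Bern a (u t) (v t) <=
  Num.max (Lambda_Bern a (u lo) (v lo)) (Lambda_Bern a (u hh) (v hh)).
Proof.
move=> a1 u_aff v_aff /between_convex_comb[l l01 ->] ulo vlo uhh vhh.
rewrite u_aff v_aff; apply: le_trans (conv_le_max _ _ l01).
exact: Lambda_Bern_convex.
Qed.

End RealFacts.

Section VertexBound.
Variables (R : realType) (a theta w : R).
Hypotheses (a1 : 1 < a) (theta0 : 0 < theta) (theta1 : theta < 1) (w01 : 0 <= w <= 1).

Local Notation mix b c := ((1 - w) * b + w * c).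
Local Notation in_rr t :=
  (Num.min theta (1 - theta) <= t <= Num.max theta (1 - theta)).

Lemma in_rr_theta : in_rr theta.
Proof. by rewrite ge_min le_max !lexx. Qed.

Lemma in_rr_1theta : in_rr (1 - theta).
Proof. by rewrite ge_min le_max !lexx !orbT. Qed.

Lemma in_rr_01 t : in_rr t -> 0 < t < 1.
Proof.
case/andP; rewrite ge_min le_max => lo hi; apply/andP; split.
  by case/orP: lo => /(lt_le_trans _)->; rewrite ?subr_gt0.
by case/orP: hi => /le_lt_trans->; rewrite ?ltrBlDr ?ltrDl.
Qed.

Lemma in_rr_mix b c : in_rr b -> in_rr c -> in_rr (mix b c).
Proof.
move=> /andP[b0 b1] /andP[c0 c1]; case/andP: w01 => ? ?.
by apply/andP; split; nra.
Qed.

Let mix_01 b c : in_rr b -> in_rr c -> 0 < mix b c < 1.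
Proof. by move=> hb hc; apply/in_rr_01/in_rr_mix. Qed.

Let mix_01c b c : in_rr b -> in_rr c -> 0 <= mix b c <= 1.
Proof. by move=> hb hc; have /andP[? ?] := mix_01 hb hc; rewrite !ltW. Qed.

(* Joint convexity of [Lambda_Bern] along affine lines lets each argument of
   [Lambda_mix] be moved to an endpoint [theta] or [1 - theta]. *)
Let Lambda_mix b c c' := Lambda_Bern a (mix b c) (mix b c').

Let Lambda_mix_ends_b M b c c' : in_rr b -> in_rr c -> in_rr c' ->
  Lambda_mix theta c c' <= M -> Lambda_mix (1 - theta) c c' <= M ->
  Lambda_mix b c c' <= M.
Proof.
move=> hb hc hc' h1 h2.
apply: le_trans (@Lambda_Bern_affine_le_max _ a (fun t => mix t c) (fun t => mix t c')
  theta (1 - theta) b a1 _ _ hb _ _ _ _) _; try by move=> *; ring.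
all: rewrite ?ge_max ?h1 ?h2 ?mix_01 ?mix_01c ?in_rr_theta ?in_rr_1theta //.
Qed.

Let Lambda_mix_ends_c M b c c' : in_rr b -> in_rr c -> in_rr c' ->
  Lambda_mix b theta c' <= M -> Lambda_mix b (1 - theta) c' <= M ->
  Lambda_mix b c c' <= M.
Proof.
move=> hb hc hc' h1 h2.
apply: le_trans (@Lambda_Bern_affine_le_max _ a (fun t => mix b t) (fun=> mix b c')
  theta (1 - theta) c a1 _ _ hc _ _ _ _) _; try by move=> *; ring.
all: rewrite ?ge_max ?h1 ?h2 ?mix_01 ?mix_01c ?in_rr_theta ?in_rr_1theta //.
Qed.

Let Lambda_mix_ends_c' M b c c' : in_rr b -> in_rr c -> in_rr c' ->
  Lambda_mix b c theta <= M -> Lambda_mix b c (1 - theta) <= M ->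
  Lambda_mix b c c' <= M.
Proof.
move=> hb hc hc' h1 h2.
apply: le_trans (@Lambda_Bern_affine_le_max _ a (fun=> mix b c) (fun t => mix b t)
  theta (1 - theta) c' a1 _ _ hc' _ _ _ _) _; try by move=> *; ring.
all: rewrite ?ge_max ?h1 ?h2 ?mix_01 ?mix_01c ?in_rr_theta ?in_rr_1theta //.
Qed.

Lemma Lambda_Bern_subsample_le b c c' : in_rr b -> in_rr c -> in_rr c' ->
  Lambda_Bern a (mix b c) (mix b c') <=
  Num.max (Lambda_Bern a theta (mix theta (1 - theta)))
          (Lambda_Bern a (mix theta (1 - theta)) theta).
Proof.
move=> hb hc hc'; set d := mix theta (1 - theta).
set M := Num.max (Lambda_Bern _ _ _) _.
have th01 : 0 <= theta <= 1 by rewrite !ltW.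
have M1 : 1 <= M.
  by rewrite le_max (Lambda_Bern_ge1 a1 th01 (mix_01 in_rr_theta in_rr_1theta)).
have diag t : in_rr t -> Lambda_Bern a t t <= M.
  move=> /in_rr_01/andP[t0 t1]; have t01 : 0 <= t <= 1 by rewrite !ltW.
  by rewrite Lambda_Bern_diag.
have m_tt : mix theta theta = theta by ring.
have m_11 : mix (1 - theta) (1 - theta) = 1 - theta by ring.
have m_1t : mix (1 - theta) theta = 1 - d by rewrite /d; ring.
have I0 := in_rr_theta; have I1 := in_rr_1theta; have Id : in_rr d := in_rr_mix I0 I1.
apply: Lambda_mix_ends_b => //; apply: Lambda_mix_ends_c => //;
  apply: Lambda_mix_ends_c' => //;
  rewrite /Lambda_mix ?m_tt ?m_11 ?m_1t -/d ?Lambda_Bern_sym;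
  by [apply: diag | rewrite le_max lexx ?orbT].
Qed.

End VertexBound.

Section Lambda.
Variables (R : realType) (a : R).
Local Open Scope ereal_scope.

Lemma eq_Lambda (p p' q q' : bool -> R) : p =1 p' -> q =1 q' ->
  Lambda a p q = Lambda a p' q'.
Proof. by move=> hp hq; rewrite /Lambda; apply: eq_bigr => z _; rewrite hp hq. Qed.

Lemma Lambda_BernE (u v : R) : (a != 0)%R -> (0 < v < 1)%R ->
  Lambda a (Bern u) (Bern v) = (Lambda_Bern a u v)%:E.
Proof.
move=> a0 /andP[v0 v1].
have term (p q : R) : q != 0%R ->
    (if p == 0%R then 0 else if q == 0%R then +oo else (Lambda_term a p q)%:E) =
    (Lambda_term a p q)%:E.
  by move=> /negbTE->; case: eqP => // ->; rewrite /Lambda_term powR0 // mul0r.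
by rewrite /Lambda big_bool /= !term ?gt_eqF ?subr_gt0.
Qed.

Lemma Lambda_Bern_self (u : R) : (0 <= u <= 1)%R -> Lambda a (Bern u) (Bern u) = 1.
Proof.
move=> /andP[u0 u1].
have term (p : R) : (0 <= p)%R ->
    (if p == 0%R then 0 else if p == 0%R then +oo else (Lambda_term a p p)%:E) = p%:E.
  by move=> p0; case: eqP => [->|_] //; rewrite Lambda_term_diag.
by rewrite /Lambda big_bool /= !term ?subr_ge0 // -EFinD subrKC.
Qed.

Lemma Lambda_pinfty (p q : bool -> R) z : p z != 0%R -> q z = 0%R ->
  Lambda a p q = +oo.
Proof.
move=> pz qz.
have nNy z' : (if p z' == 0%R then 0 else if q z' == 0%R then +oo
    else ((p z' `^ a) * (q z' `^ (1 - a)))%:E) != -oo.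
  by case: ifP => _ //; case: ifP.
rewrite /Lambda big_bool; case: z pz qz => pz qz.
  by rewrite (negbTE pz) qz eqxx /= addye ?nNy.
by rewrite (negbTE pz) qz eqxx /= addey ?nNy.
Qed.

End Lambda.

Lemma Lambda_mixture_le (R : realType) (alpha theta w A B B' : R) :
  1 < alpha -> 0 <= theta <= 1 -> 0 < w < 1 ->
  Num.min theta (1 - theta) <= A <= Num.max theta (1 - theta) ->
  Num.min theta (1 - theta) <= B <= Num.max theta (1 - theta) ->
  Num.min theta (1 - theta) <= B' <= Num.max theta (1 - theta) ->
  (Lambda alpha (Bern ((1 - w) * A + w * B)) (Bern ((1 - w) * A + w * B'))
   <= Order.max
        (Lambda alpha (Bern theta) (Bern ((1 - w) * theta + w * (1 - theta))))
        (Lambda alpha (Bern ((1 - w) * theta + w * (1 - theta))) (Bern theta)))%E.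
Proof.
move=> a1 /andP[th0 th1] /andP[w0 w1] IA IB IB'.
set d := (1 - w) * theta + w * (1 - theta).
have d0 : 0 < d by rewrite /d; nra.
have d1 : d < 1 by rewrite /d; nra.
have [th01|] := boolP (0 < theta < 1).
  case/andP: th01 => th0' th1'; have w01 : 0 <= w <= 1 by rewrite !ltW.
  have a0 : alpha != 0 by rewrite gt_eqF // (lt_trans ltr01 a1).
  rewrite !Lambda_BernE ?d0 ?d1 ?th0' ?th1' //.
    by rewrite -EFin_max lee_fin Lambda_Bern_subsample_le.
  exact/(in_rr_01 th0' th1')/(in_rr_mix w01).
rewrite negb_and -!leNgt => /orP[th_le0|th_ge1].
  rewrite (@Lambda_pinfty _ _ (Bern d) (Bern theta) true) ?le_max ?leey ?orbT //=.
    by rewrite gt_eqF.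
  by apply/eqP; rewrite eq_le th_le0.
rewrite (@Lambda_pinfty _ _ (Bern d) (Bern theta) false) ?le_max ?leey ?orbT //=.
  by rewrite subr_eq0 eq_sym lt_eqF.
by apply/eqP; rewrite subr_eq0 eq_sym eq_le th1.
Qed.

Local Open Scope fset_scope.

Section Batches.
Variable T : choiceType.
Implicit Types (X y z : {fset T}).

Lemma mem_batches k X y : (y \in batches k X) = (y `<=` X) && (#|` y| == k).
Proof. by rewrite /batches mem_filter andbC -fpowersetE. Qed.

Lemma uniq_batches k X : uniq (batches k X).
Proof. exact: filter_uniq (fset_uniq _). Qed.

Lemma batches0 X : perm_eq (batches 0 X) [:: fset0].
Proof.
apply: uniq_perm => //; first exact: uniq_batches.
move=> y; rewrite mem_batches inE cardfs_eq0.
by case: eqP => [->|]; rewrite ?fsub0set ?andbF.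
Qed.

Lemma batchesS X a k : a \in X ->
  perm_eq (batches k.+1 X)
          (batches k.+1 (X `\ a) ++ map (fun z => a |` z) (batches k (X `\ a))).
Proof.
move=> aX.
have a_notin z : z \in batches k (X `\ a) -> a \notin z.
  by rewrite mem_batches fsubsetD1 => /andP[/andP[_ ->]].
apply: uniq_perm; first exact: uniq_batches.
  rewrite cat_uniq uniq_batches /=; apply/andP; split.
    apply/hasPn => y /mapP[z _ ->]; rewrite mem_batches fsubsetD1.
    by rewrite fset1U1 andbF.
  rewrite map_inj_in_uniq ?uniq_batches //.
  by move=> z1 z2 /a_notin h1 /a_notin h2 e; rewrite -(fsetU1K h1) e fsetU1K.
move=> y; rewrite mem_cat mem_batches; apply/idP/idP.
  move=> /andP[yX /eqP cy]; have [ay|ay] := boolP (a \in y).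
    apply/orP; right; apply/mapP; exists (y `\ a); last by rewrite fsetD1K.
    rewrite mem_batches fsubsetD1 fsetD11 andbT.
    rewrite (fsubset_trans (fsubD1set _ _) yX) /=.
    by move: cy; rewrite (cardfsD1 a y) ay add1n => -[->].
  by apply/orP; left; rewrite mem_batches fsubsetD1 yX ay cy eqxx.
case/orP.
  rewrite mem_batches => /andP[yX ->]; rewrite andbT.
  exact: fsubset_trans yX (fsubD1set _ _).
move=> /mapP[z zB ->]; have az := a_notin _ zB.
move: zB; rewrite mem_batches => /andP[zX /eqP cz].
rewrite fsubUset fsub1set aX (fsubset_trans zX (fsubD1set _ _)) /=.
by rewrite cardfsU1 az cz.
Qed.

Lemma size_batches k X : size (batches k X) = 'C(#|` X|, k).
Proof.
move cX : #|` X| => n; elim: n X k cX => [|n IHn] X [|k] cX.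
- by rewrite (perm_size (batches0 X)) bin0.
- rewrite bin0n; case E: (batches k.+1 X) => [//|y s].
  have : y \in batches k.+1 X by rewrite E mem_head.
  by rewrite mem_batches => /andP[/fsubset_leq_card]; rewrite cX leqn0 => /eqP ->.
- by rewrite (perm_size (batches0 X)) bin0.
- have [X0|[a aX]] := fset_0Vmem X; first by move: cX; rewrite X0 cardfs0.
  have cXa : #|` X `\ a| = n by move: cX; rewrite (cardfsD1 a X) aX add1n => -[].
  by rewrite (perm_size (batchesS k aX)) size_cat size_map binS !IHn.
Qed.

End Batches.

Lemma sumr_const_seq (R : nmodType) (I : Type) (s : seq I) (x : R) :
  \sum_(i <- s) x = x *+ size s.
Proof. by rewrite big_const_seq count_predT iter_addr_0. Qed.

Definition batch_mean (R : realType) (T : choiceType) q (f : {fset T} -> R) X :=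
  (\sum_(y <- batches q X) f y) / 'C(#|` X|, q)%:R.

Section BatchMean.
Local Open Scope ring_scope.
Variables (R : realType) (T : choiceType).
Implicit Types (X : {fset T}) (f : {fset T} -> R).

Lemma sum_batchesE q f X :
  \sum_(y <- batches q X) f y = 'C(#|` X|, q)%:R * batch_mean q f X.
Proof.
rewrite /batch_mean; have [C0|C0] := eqVneq 'C(#|` X|, q) 0%N.
  by move: (size_batches q X); rewrite C0 => /size0nil ->; rewrite big_nil mul0r.
by rewrite mulrC divfK // pnatr_eq0.
Qed.

Lemma batch_mean_in q f X lo hh : (q <= #|` X|)%N ->
  (forall y, lo <= f y <= hh) -> lo <= batch_mean q f X <= hh.
Proof.
move=> qX f_in; have C0 : 0 < 'C(#|` X|, q)%:R :> R by rewrite ltr0n bin_gt0.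
rewrite /batch_mean ler_pdivlMr // ler_pdivrMr // -size_batches !mulr_natr.
rewrite -!sumr_const_seq; apply/andP; split; apply: ler_sum => y _.
  by case/andP: (f_in y).
by case/andP: (f_in y).
Qed.

Lemma batch_mean0 f X : batch_mean 0 f X = f fset0.
Proof. by rewrite /batch_mean (perm_big _ (batches0 X)) big_seq1 bin0 divr1. Qed.

Lemma ratio_binS n k : (k <= n)%N ->
  'C(n, k)%:R / 'C(n.+1, k.+1)%:R = k.+1%:R / n.+1%:R :> R.
Proof.
move=> kn; apply/eqP; rewrite eqr_div ?pnatr_eq0 -?lt0n ?bin_gt0 // -!natrM.
by rewrite -(mul_bin_diag n.+1 k) mulnC.
Qed.

(* The proportion of (k+1)-batches of [a |` X0] containing [a] is
   ['C(n, k) / 'C(n.+1, k.+1) = k.+1 / n.+1], where [n = #|` X0|]. *)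
Lemma batch_mean_fsetU1 k f a X0 : a \notin X0 -> (k <= #|` X0|)%N ->
  batch_mean k.+1 f (a |` X0) =
  (1 - k.+1%:R / #|` X0|.+1%:R) * batch_mean k.+1 f X0 +
  k.+1%:R / #|` X0|.+1%:R * batch_mean k (fun z => f (a |` z)) X0.
Proof.
move=> aX0 kX0.
have cX : #|` a |` X0| = #|` X0|.+1 by rewrite cardfsU1 aX0.
have CS0 : 0 < 'C(#|` X0|.+1, k.+1)%:R :> R by rewrite ltr0n bin_gt0.
rewrite -ratio_binS // {1}/batch_mean (perm_big _ (batchesS k (fset1U1 a X0))).
rewrite big_cat big_map /= fsetU1K // !sum_batchesE cX.
move: CS0; rewrite binS natrD => CS0.
by field; rewrite gt_eqF.
Qed.

Lemma neighbour_batch_mean q f x x' lo hh : (q < #|` x|)%N -> neighbour x x' ->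
  (forall y, lo <= f y <= hh) ->
  let w := q%:R / #|` x|%:R in
  exists A B B', [/\ lo <= A <= hh, lo <= B <= hh, lo <= B' <= hh,
    batch_mean q f x = (1 - w) * A + w * B &
    batch_mean q f x' = (1 - w) * A + w * B'].
Proof.
move=> qx [a [a' [ax a'x ->]]] f_in w.
case: q qx @w => [|k] qx w.
  exists (f fset0), (f fset0), (f fset0).
  by rewrite !batch_mean0 /w mul0r subr0 mul1r mul0r addr0 f_in.
set X0 := x `\ a.
have xE : x = a |` X0 by rewrite fsetD1K.
have a'X0 : a' \notin X0 by apply: contra a'x => /fsetD1P[].
have cx : #|` x| = #|` X0|.+1 by rewrite {1}xE cardfsU1 fsetD11.
have kX0 : (k < #|` X0|)%N by rewrite -ltnS -cx.
exists (batch_mean k.+1 f X0), (batch_mean k (fun z => f (a |` z)) X0),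
  (batch_mean k (fun z => f (a' |` z)) X0).
split; rewrite ?batch_mean_in ?(ltnW kX0) //.
  by rewrite /w cx {1}xE batch_mean_fsetU1 ?fsetD11 ?(ltnW kX0).
by rewrite /w cx fsetUC batch_mean_fsetU1 ?(ltnW kX0).
Qed.
End BatchMean.

Section Pmfs.
Local Open Scope ring_scope.
Variable R : realType.

Lemma rr_pmfE (theta : R) hy : rr_pmf theta hy =1 Bern (Bern theta hy).
Proof.
move=> z; rewrite /rr_pmf big_bool /Bern.
by case: hy; case: z; rewrite /= ?subr0 ?subrr ?subr0 ?sub0r ?oppr0 ?normrN
  ?normr0 ?normr1 ?eqxx ?[0 == _]eq_sym ?oner_eq0 /=; ring.
Qed.

Lemma mix_pmfE (T : choiceType) q (theta : R) (h : {fset T} -> bool) x :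
  (q <= #|` x|)%N ->
  mix_pmf q theta h x =1 Bern (batch_mean q (fun y => Bern theta (h y)) x).
Proof.
move=> qx z; have C0 : 'C(#|` x|, q)%:R != 0 :> R by rewrite pnatr_eq0 -lt0n bin_gt0.
rewrite /mix_pmf /batch_mean; under eq_bigr do rewrite rr_pmfE.
rewrite -mulr_suml; case: z => //=.
rewrite sumrB sumr_const_seq size_batches mulrBl; congr (_ - _).
by rewrite -mulr_natr !mul1r divff.
Qed.

Lemma mixture_BernE (w s t : R) :
  mixture w (Bern s) (Bern t) =1 Bern ((1 - w) * s + w * t).
Proof. by case; rewrite /mixture /Bern //; ring. Qed.

End Pmfs.

Lemma card_neighbour (T : choiceType) (x x' : {fset T}) :
  neighbour x x' -> #|` x'| = #|` x|.
Proof.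
move=> [a [a' [ax a'x ->]]].
have a'xa : a' \notin x `\ a by apply: contra a'x => /fsetD1P[].
by rewrite fsetUC cardfsU1 a'xa (cardfsD1 a x) ax.
Qed.


Theorem mainTheorem13 (R : realType) (T : choiceType) (q N : nat)
  (theta alpha : R) (h : {fset T} -> bool) (x x' : {fset T}) :
  0 <= theta <= 1 -> 1 < alpha ->
  (q < N)%N -> #|` x| = N -> neighbour x x' ->
  let w := (q%:R / N%:R : R) in
  (Lambda alpha (mix_pmf q theta h x) (mix_pmf q theta h x')
   <= Order.max
        (Lambda alpha (mixture w (Bern theta) (Bern theta))
                      (mixture w (Bern theta) (Bern (1 - theta))))
        (Lambda alpha (mixture w (Bern theta) (Bern (1 - theta)))
                      (mixture w (Bern theta) (Bern (1 - (1 - theta))))))%E.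
Proof.
move=> th01 a1 qN cx nb; cbv zeta; set w := (q%:R / N%:R : R).
pose f y := Bern theta (h y).
have f_in y : Num.min theta (1 - theta) <= f y <= Num.max theta (1 - theta).
  by rewrite /f /Bern; case: (h y); rewrite ge_min le_max lexx ?orbT.
have qx : (q < #|` x|)%N by rewrite cx.
have qx' : (q <= #|` x'|)%N by rewrite (card_neighbour nb) ltnW.
rewrite (eq_Lambda _ (mix_pmfE _ _ (ltnW qx)) (mix_pmfE _ _ qx')) -/f.
rewrite !(eq_Lambda _ (mixture_BernE _ _ _) (mixture_BernE _ _ _)) subKr.
have -> : ((1 - w) * theta + w * theta = theta)%R by ring.
have [q0|q_gt0] := posnP q.
  have w0 : w = 0 by rewrite /w q0 mul0r.
  rewrite q0 !batch_mean0 w0 subr0 !mul0r !mul1r addr0 !Lambda_Bern_self //.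
    by rewrite le_max lexx.
  by rewrite /f /Bern; case/andP: th01; case: (h _) => *; lra.
have w01 : (0 < w < 1)%R.
  have N0 : (0 < N%:R :> R)%R by rewrite ltr0n (leq_ltn_trans _ qN).
  have wN : (w * N%:R = q%:R)%R by rewrite /w; field; rewrite gt_eqF.
  have := ltr_nat R q N; have := ltr0n R q; rewrite qN q_gt0 => *; apply/andP; split; nra.
have [A [B [B' [IA IB IB' -> ->]]]] := neighbour_batch_mean qx nb f_in.
by rewrite cx -/w; apply: Lambda_mixture_le.
Qed.
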